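(* Let $X\subseteq U$ be a fixed set of $|X|=m$ keys, and let $S\subseteq[2^r]$ with $|S|/2^r=\rho$. Let $h:U\to[2^r]$ be a simple tabulation hash function, and define $p_0'=1-(1-\rho)^m$. If $p$ denotes the probability that $h(X)\cap S\neq\emptyset$, then $$|p-p_0'|\le m^{2-1/c}\rho^2.$$ Moreover, if $q\in U\setminus X$ is a distinguished query key and $S$ (and hence $\rho$) is allowed to depend on $h(q)$, i.e. for every $z\in[2^r]$, conditioned on $h(q)=z$ the set $S$ is a fixed function of $z$ and $p$ denotes the conditional probability that $h(X)\cap S\ne\emptyset$, then $|p-p_0'|\le 2m^{2-1/c}\rho^2$.
   Context: Simple tabulation hashing: the key universe is $U=[u]$, each key $x\in U$ is viewed as a vector $(x[0],\dots,x[c-1])$ of $c=O(1)$ characters from $\Sigma=[u^{1/c}]$; the range is $[2^r]$, viewed as $r$-bit strings. $h(x)=h_0(x[0])\oplus\cdots\oplus h_{c-1}(x[c-1])$ with $h_0,\dots,h_{c-1}:\Sigma\to[2^r]$ independent fully random functions and $\oplus$ bitwise XOR. *)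

From HB Require Import structures.
From mathcomp Require Import all_boot all_order all_algebra.
From mathcomp Require Import reals exp.
Set Implicit Arguments. Unset Strict Implicit. Unset Printing Implicit Defensive.
Import Order.TTheory GRing.Theory Num.Theory.
Local Open Scope ring_scope.

(* Keys: vectors of c characters from Sigma = [s]; the key universe U = [s^c]. *)
Definition Key (c s : nat) := {ffun 'I_c -> 'I_s}.
(* Hash values in [2^r], viewed as r-bit strings. *)
Definition HV (r : nat) := {ffun 'I_r -> bool}.
(* The random choice: c independent fully random tables h_i : Sigma -> [2^r]. *)
Definition Tables (c s r : nat) := {ffun 'I_c -> {ffun 'I_s -> HV r}}.

Definition tab_hash c s r (T : Tables c s r) (x : Key c s) : HV r :=
  [ffun b => \big[addb/false]_(i < c) T i (x i) b].

Definition prob (R : numFieldType) c s r (E : pred (Tables c s r)) : R :=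
  #|[set T | E T]|%:R / #|{: Tables c s r}|%:R.
Definition cond_prob (R : numFieldType) c s r (E F : pred (Tables c s r)) : R :=
  #|[set T | E T && F T]|%:R / #|[set T | F T]|%:R.

Definition hits c s r (X : {set Key c s}) (S : {set HV r}) (T : Tables c s r) : bool :=
  [exists x in X, tab_hash T x \in S].

Definition density (R : numFieldType) r (S : {set HV r}) : R := #|S|%:R / (2 ^ r)%:R.

Definition p0' (R : numFieldType) (m : nat) (rho : R) : R := 1 - (1 - rho) ^+ m.

From HB Require Import structures.
From mathcomp Require Import all_boot all_order all_algebra.
From mathcomp Require Import reals exp.
From mathcomp Require Import lra ring.

(* Call a table entry [T k a] free if the conditioning leaves it uniformly
   random.  Shifting the free entry read by a key [x] by a uniform value makes
   [h(x)] uniform and independent of every key that differs from [x] at that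
   position.  Hence adding [x] to a list [l] of keys multiplies the probability
   that no key of [l] hashes into [S] by [1 - rho], up to an error of [rho^2]
   times the number of keys of [l] sharing that character of [x].  Telescoping
   over [X] bounds the total error by [rho^2 * sum_x g x], where [g x] is the
   least such count over the free positions of [x].  Counting tuples of keys
   that agree with [x] position by position gives [sum_x g(x)^c <= K m^c], where
   at most [K] keys have prescribed characters at their free positions ([K = 1]
   unconditionally, [K = 2^c] given [h(q) = z]), and the power mean inequality
   turns this into [sum_x g x <= K^(1/c) m^(2 - 1/c)]. *)

Set Implicit Arguments. Unset Strict Implicit. Unset Printing Implicit Defensive.
Import Order.TTheory GRing.Theory Num.Theory.
Local Open Scope ring_scope.

Lemma card_set_sum (T : finType) (P : pred T) :
  #|[set x | P x]| = (\sum_(x : T) P x)%N.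
Proof. by rewrite -sum1_card big_mkcond; apply: eq_bigr => x _; rewrite inE; case: (P x). Qed.

Lemma prodn_bool (I : finType) (b : pred I) : (\prod_(i : I) b i)%N = [forall i, b i].
Proof.
have [/forallP b1 | /forallPn [i bi]] := boolP [forall i, b i].
  by apply: big1 => i _; rewrite b1.
by rewrite (bigD1 i) //= (negbTE bi) mul0n.
Qed.

Lemma exists_ffun_neq (aT : finType) (rT : eqType) (f g : {ffun aT -> rT}) :
  f != g -> exists k, f k != g k.
Proof.
move=> fg; apply/existsP; apply: contraNT fg => /existsPn fg.
by apply/eqP/ffunP => k; apply/eqP/negPn/fg.
Qed.

Section Shift.
Variables c s r : nat.
Local Notation Tab := (Tables c s r).

Definition hv_xor (u v : HV r) : HV r := [ffun b => u b (+) v b].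

Lemma hv_xorK v : involutive (hv_xor ^~ v).
Proof. by move=> u; apply/ffunP => b; rewrite !ffunE -addbA addbb addbF. Qed.

Lemma hv_xor_inj u : injective (hv_xor u).
Proof.
move=> v w /ffunP e; apply/ffunP => b.
by have := e b; rewrite !ffunE => /addbI.
Qed.

Lemma card_HV : #|{: HV r}| = (2 ^ r)%N.
Proof. by rewrite card_ffun card_bool card_ord. Qed.

Definition shift_entry (k : 'I_c) (a : 'I_s) (v : HV r) (T : Tab) : Tab :=
  [ffun i => [ffun b => if (i == k) && (b == a) then hv_xor (T i b) v else T i b]].

Lemma shift_entryK k a v : involutive (shift_entry k a v).
Proof.
move=> T; apply/ffunP => i; apply/ffunP => b; rewrite !ffunE.
by case: ifP => kab; rewrite ?ffunE kab // hv_xorK.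
Qed.

Lemma tab_hash_shift_entry_out k a v T (x : Key c s) :
  x k != a -> tab_hash (shift_entry k a v T) x = tab_hash T x.
Proof.
move=> xk; apply/ffunP => b; rewrite !ffunE; apply: eq_bigr => i _; rewrite !ffunE.
by case: eqP => // ->; rewrite (negbTE xk).
Qed.

Lemma tab_hash_shift_entry k a v T (x : Key c s) :
  x k = a -> tab_hash (shift_entry k a v T) x = hv_xor (tab_hash T x) v.
Proof.
move=> xk; apply/ffunP => b; rewrite !ffunE (bigD1 k) // [in RHS](bigD1 k) //=.
rewrite !ffunE eqxx xk eqxx /= ffunE -!addbA [_ (+) v b]addbC; congr (_ (+) _).
by congr (_ (+) _); apply: eq_bigr => i ik; rewrite !ffunE (negbTE ik).
Qed.

Definition shift_invariant (k : 'I_c) (a : 'I_s) (B : pred Tab) :=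
  forall v T, B (shift_entry k a v T) = B T.

(* Double counting over the pairs [(v, T)]: shifting the entry read by [x] at
   position [k] by every [v] makes [tab_hash T x] uniform, while [B] does not
   notice the shift. *)
Lemma card_hash_in_shift_invariant k (x : Key c s) (S : {set HV r}) (B : pred Tab) :
  shift_invariant k (x k) B ->
  (#|[set T | (tab_hash T x \in S) && B T]| * 2 ^ r = #|S| * #|[set T | B T]|)%N.
Proof.
move=> hB.
have shifted v : #|[set T | (tab_hash T x \in S) && B T]| =
    (\sum_T ((hv_xor (tab_hash T x) v \in S) && B T))%N.
  rewrite -(card_preimset _ (can_inj (shift_entryK k (x k) v))) /preimset card_set_sum.
  by apply: eq_bigr => T _; rewrite inE (tab_hash_shift_entry v T (erefl (x k))) hB.
have xor_uniform u : (\sum_(v : HV r) (hv_xor u v \in S))%N = #|S|.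
  by rewrite -(card_preimset S (@hv_xor_inj u)) /preimset card_set_sum.
rewrite -card_HV mulnC -[in LHS]sum_nat_const.
under eq_bigr => v _ do rewrite (shifted v).
rewrite exchange_big /= card_set_sum big_distrr /=; apply: eq_bigr => T _.
case: (B T); last by rewrite muln0; apply: big1 => v _; rewrite andbF.
by rewrite muln1 -(xor_uniform (tab_hash T x)); apply: eq_bigr => v _; rewrite andbT.
Qed.

End Shift.

Lemma density_ge0 (R : numFieldType) r (S : {set HV r}) : 0 <= density R S.
Proof. exact: divr_ge0. Qed.

Lemma density_le1 (R : numFieldType) r (S : {set HV r}) : density R S <= 1.
Proof.
rewrite ler_pdivrMr ?mul1r ?ltr0n ?expn_gt0 // ler_nat -card_HV.
exact: max_card.
Qed.

Section CondProb.
Variables (R : numFieldType) (c s r : nat) (W : pred (Tables c s r)).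
Local Notation Tab := (Tables c s r).
Local Notation P E := (cond_prob R E W).
Implicit Types E F : pred Tab.

Lemma eq_cond_prob E F : E =1 F -> P E = P F.
Proof. by move=> EF; congr (_%:R / _); apply: eq_card => T; rewrite !inE EF. Qed.

Lemma cond_prob_ge0 E : 0 <= P E.
Proof. exact: divr_ge0. Qed.

Lemma le_cond_prob E F : (forall T, E T -> F T) -> P E <= P F.
Proof.
move=> EF; rewrite ler_wpM2r ?invr_ge0 // ler_nat subset_leq_card //.
by apply/subsetP => T; rewrite !inE => /andP[/EF -> ->].
Qed.

Lemma cond_probID E F :
  P E = P (fun T => E T && F T) + P (fun T => E T && ~~ F T).
Proof.
rewrite /cond_prob -mulrDl -natrD !card_set_sum -big_split /=; congr (_%:R / _).
by apply: eq_bigr => T _; case: (E T); case: (F T); case: (W T).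
Qed.

Lemma cond_probU_le E F : P (fun T => E T || F T) <= P E + P F.
Proof.
rewrite /cond_prob -mulrDl -natrD ler_wpM2r ?invr_ge0 // ler_nat !card_set_sum.
rewrite -big_split /=; apply: leq_sum => T _.
by case: (E T); case: (F T); case: (W T).
Qed.

Lemma cond_prob_has_le (I : eqType) (E : I -> pred Tab) (l : seq I) (b : R) :
  (forall i, i \in l -> P (E i) <= b) -> P (fun T => has (E^~ T) l) <= (size l)%:R * b.
Proof.
elim: l => [|i l IHl] Eb /=.
  by rewrite mul0r (eq_cond_prob (F := pred0)) // /cond_prob card_set_sum big1 ?mul0r.
apply: le_trans (cond_probU_le _ _) _.
rewrite -addn1 natrD mulrDl mul1r addrC lerD ?Eb ?mem_head //.
by apply: IHl => j jl; rewrite Eb // inE jl orbT.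
Qed.

Hypothesis W_nonempty : exists T, W T.

Lemma cond_probT : P predT = 1.
Proof.
have [T WT] := W_nonempty; rewrite /cond_prob divff // pnatr_eq0 -lt0n card_gt0.
by apply/set0Pn; exists T; rewrite inE.
Qed.

Lemma cond_probC E : P (fun T => ~~ E T) = 1 - P E.
Proof.
have PE : P (fun T => predT T && E T) = P E by apply: eq_cond_prob.
by rewrite -cond_probT (cond_probID predT E) PE addrC addKr; apply: eq_cond_prob.
Qed.

End CondProb.

Lemma cond_prob_hash_in_indep (R : numFieldType) c s r (W B : pred (Tables c s r))
    k (x : Key c s) (S : {set HV r}) :
  shift_invariant k (x k) W -> shift_invariant k (x k) B ->
  cond_prob R (fun T => (tab_hash T x \in S) && B T) W = density R S * cond_prob R B W.
Proof.
move=> hW hB.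
have hBW : shift_invariant k (x k) (fun T => B T && W T) by move=> v T; rewrite hB hW.
have := card_hash_in_shift_invariant S hBW => /(congr1 (fun n => n%:R : R)).
rewrite !natrM /cond_prob /density mulrA => e.
have r2 : (2 ^ r)%:R != 0 :> R by rewrite pnatr_eq0 expn_eq0.
congr (_ / _); apply: (mulIf r2); rewrite mulrAC divfK //.
by rewrite -e; congr (_%:R * _); apply: eq_card => T; rewrite !inE andbA.
Qed.

Section Codegree.
Variables (c s : nat) (free : 'I_c -> 'I_s -> bool) (X : {set Key c s}).
Local Notation Key := (Key c s).

(* At a position that is not free every key of [X] counts, so that [min_codeg]
   is in effect a minimum over the free positions, capped at [#|X|]. *)
Definition free_codeg k (x : Key) : nat :=
  #|[set y in X | free k (x k) ==> (y k == x k)]|.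

Definition min_codeg (x : Key) : nat := \big[Order.min/#|X|]_(k < c) free_codeg k x.

Lemma free_codeg_le_card k (x : Key) : (free_codeg k x <= #|X|)%N.
Proof. by apply: subset_leq_card; apply/subsetP => y; rewrite inE => /andP[]. Qed.

Lemma free_codeg_nonfree k (x : Key) : ~~ free k (x k) -> free_codeg k x = #|X|.
Proof. by move=> xk; apply: eq_card => y; rewrite inE (negbTE xk) andbT. Qed.

Lemma min_codeg_le k (x : Key) : (min_codeg x <= free_codeg k x)%N.
Proof. exact: (bigmin_le (T := nat)). Qed.

Lemma count_le_free_codeg k (x : Key) (l : seq Key) : uniq l -> {subset l <= X} ->
  free k (x k) -> (count (fun y : Key => y k == x k) l <= free_codeg k x)%N.
Proof.
move=> ul lX xk; rewrite -size_filter -(card_uniqP (filter_uniq _ ul)).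
apply: subset_leq_card; apply/subsetP => y.
by rewrite mem_filter inE xk => /andP[-> /lX ->].
Qed.

Lemma prod_free_codeg (x : Key) :
  (\prod_(k < c) free_codeg k x =
   \sum_(f : {ffun 'I_c -> Key}) [forall k, (f k \in X) && (free k (x k) ==> (f k k == x k))])%N.
Proof.
under eq_bigr => k _ do rewrite /free_codeg card_set_sum.
rewrite bigA_distr_bigA /=; apply: eq_bigr => f _.
by rewrite -prodn_bool.
Qed.

Variable K : nat.
Hypothesis agree_le : forall a : Key,
  (#|[set x : Key | [forall k, free k (x k) ==> (x k == a k)]]| <= K)%N.

(* [min_codeg x ^ c] is at most the number of families [f] of keys of [X] with
   [f k] agreeing with [x] at every free position [k]; exchanging the sums, each
   such [f] is counted for at most [K] keys [x]. *)
Lemma sum_min_codeg_exp : (\sum_(x in X) min_codeg x ^ c <= K * #|X| ^ c)%N.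
Proof.
apply: (@leq_trans (\sum_(x in X) \prod_(k < c) free_codeg k x)).
  apply: leq_sum => x _; rewrite -{1}(card_ord c) -prod_nat_const.
  by apply: leq_prod => k _; apply: min_codeg_le.
under eq_bigr => x _ do rewrite prod_free_codeg.
have tuples : (\sum_(f : {ffun 'I_c -> Key}) (f \in ffun_on X) = #|X| ^ c)%N.
  have := @card_ffun_on 'I_c _ X; rewrite card_ord => <-.
  rewrite -sum1_card [RHS]big_mkcond.
  by apply: eq_bigr => f _; case: (_ \in _).
rewrite exchange_big /= mulnC -tuples big_distrl /=; apply: leq_sum => f _.
have [/ffun_onP fX | fX] := boolP (f \in ffun_on X); last first.
  rewrite mul0n leqn0 sum_nat_eq0; apply/forall_inP => x _.
  rewrite eqb0; apply/negP => /forallP fXx.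
  by case/ffun_onP: fX => k; have /andP[] := fXx k.
rewrite mul1n; apply: leq_trans (agree_le [ffun k => f k k]).
rewrite card_set_sum big_mkcond leq_sum // => x _.
case: (x \in X) => //=; case: forallP => //= agree.
rewrite lt0b; apply/forallP => k; rewrite ffunE eq_sym.
by have /andP[] := agree k.
Qed.

End Codegree.

Section MissProbability.
Variables (R : realFieldType) (c s r : nat).
Local Notation Tab := (Tables c s r).
Local Notation Key := (Key c s).
Variables (W : pred Tab) (free : 'I_c -> 'I_s -> bool).
Hypothesis W_nonempty : exists T, W T.
Hypothesis W_shift : forall k a, free k a -> shift_invariant k a W.
Variable S : {set HV r}.
Local Notation P E := (cond_prob R E W).
Local Notation rho := (density R S).

Definition hit (x : Key) : pred Tab := fun T => tab_hash T x \in S.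
Definition miss (l : seq Key) : pred Tab := fun T => ~~ has (hit^~ T) l.

Lemma cond_prob_hit_indep k (x : Key) (B : pred Tab) :
  free k (x k) -> shift_invariant k (x k) B ->
  P (fun T => hit x T && B T) = rho * P B.
Proof. by move=> xk; apply: cond_prob_hash_in_indep; apply: W_shift. Qed.

Lemma cond_prob_hit k (x : Key) : free k (x k) -> P (hit x) = rho.
Proof.
move=> xk; rewrite -[rho]mulr1 -(cond_probT R W_nonempty) -(cond_prob_hit_indep xk) //.
by apply: eq_cond_prob => T; rewrite andbT.
Qed.

Lemma cond_prob_hit2 j k (x y : Key) :
  x j != y j -> free j (x j) -> free k (y k) -> P (fun T => hit x T && hit y T) = rho ^+ 2.
Proof.
move=> xyj xj yk; rewrite (cond_prob_hit_indep xj) ?(cond_prob_hit yk) ?expr2 //.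
by move=> v T; rewrite /hit tab_hash_shift_entry_out // eq_sym.
Qed.

Lemma cond_prob_hit_defect k (x : Key) (B C : pred Tab) :
  free k (x k) -> shift_invariant k (x k) B ->
  P (fun T => (B T && C T) && ~~ hit x T) - (1 - rho) * P (fun T => B T && C T) =
  P (fun T => (B T && ~~ C T) && hit x T) - rho * P (fun T => B T && ~~ C T).
Proof.
move=> xk hB.
have splitBC := cond_probID R W (fun T => B T && C T) (hit x).
have splitB := cond_probID R W B C.
have indep := cond_prob_hit_indep xk hB.
have split_hitB : P (fun T => hit x T && B T) =
    P (fun T => (B T && C T) && hit x T) + P (fun T => (B T && ~~ C T) && hit x T).
  by rewrite (cond_probID R W _ C); congr (_ + _); apply: eq_cond_prob => T;
    case: (hit x T) (B T) (C T) => [] [] [].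
rewrite splitB mulrDr in indep; lra.
Qed.

Variable X : {set Key}.
Hypothesis X_free : forall x, x \in X -> exists k, free k (x k).
Hypothesis X_sep : forall x y, x \in X -> y \in X -> x != y ->
  exists2 j, x j != y j & free j (x j) || free j (y j).

Lemma cond_prob_hit_mem x : x \in X -> P (hit x) = rho.
Proof. by move=> /X_free [k]; apply: cond_prob_hit. Qed.

Lemma cond_prob_hit2_mem x y : x \in X -> y \in X -> x != y ->
  P (fun T => hit x T && hit y T) = rho ^+ 2.
Proof.
move=> xX yX xy; have [ky yk] := X_free yX; have [kx xk] := X_free xX.
have [j xyj /orP[xj | yj]] := X_sep xX yX xy; first exact: cond_prob_hit2 xyj xj yk.
have -> : P (fun T => hit x T && hit y T) = P (fun T => hit y T && hit x T).
  by apply: eq_cond_prob => T; exact: andbC.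
by apply: cond_prob_hit2 yj xk; rewrite eq_sym.
Qed.

Lemma cond_prob_not_miss_le l : {subset l <= X} ->
  P (fun T => ~~ miss l T) <= (size l)%:R * rho.
Proof.
move=> lX; have -> : P (fun T => ~~ miss l T) = P (fun T => has (hit^~ T) l).
  by apply: eq_cond_prob => T; exact: negbK.
by apply: cond_prob_has_le => y /lX /cond_prob_hit_mem ->.
Qed.

Lemma cond_prob_hit_not_miss_le x l : x \in X -> {subset l <= X} -> x \notin l ->
  P (fun T => ~~ miss l T && hit x T) <= (size l)%:R * rho ^+ 2.
Proof.
move=> xX lX xl.
have -> : P (fun T => ~~ miss l T && hit x T) = P (fun T => has (fun y => hit x T && hit y T) l).
  apply: eq_cond_prob => T; rewrite negbK andbC.
  by case: (hit x T); last by apply/esym/hasPn.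
apply: cond_prob_has_le => y yl; rewrite cond_prob_hit2_mem // ?lX //.
by apply: contraNneq xl => ->.
Qed.

(* Keys differing from [x] at the free position [k] cannot see a shift of the
   entry [T k (x k)], so only the keys sharing that character contribute. *)
Lemma miss_cons_approx k x l : x \in X -> {subset l <= X} -> x \notin l -> free k (x k) ->
  `|P (miss (x :: l)) - (1 - rho) * P (miss l)|
    <= rho ^+ 2 * (count (fun y : Key => y k == x k) l)%:R.
Proof.
move=> xX lX xl xk.
set same := fun y : Key => y k == x k.
set l_same := filter same l; set l_other := filter (predC same) l.
have missE T : miss l T = miss l_other T && miss l_same T.
  by rewrite /miss -(perm_has _ (permEl (perm_filterC same l))) has_cat negb_or andbC.
have other_inv : shift_invariant k (x k) (miss l_other).
  move=> v T; congr negb; apply: eq_in_has => y.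
  by rewrite mem_filter => /andP[yk _]; rewrite /hit tab_hash_shift_entry_out.
have l_sameX : {subset l_same <= X} by move=> y; rewrite mem_filter => /andP[_ /lX].
have x_l_same : x \notin l_same by rewrite mem_filter negb_and xl orbT.
have -> : P (miss (x :: l)) = P (fun T => (miss l_other T && miss l_same T) && ~~ hit x T).
  by apply: eq_cond_prob => T; rewrite [LHS]negb_or andbC -missE.
have -> : P (miss l) = P (fun T => miss l_other T && miss l_same T).
  exact: eq_cond_prob.
rewrite (cond_prob_hit_defect _ xk other_inv) -size_filter.
have hit_le : P (fun T => (miss l_other T && ~~ miss l_same T) && hit x T)
    <= (size l_same)%:R * rho ^+ 2.
  apply: le_trans (cond_prob_hit_not_miss_le xX l_sameX x_l_same).
  by apply: le_cond_prob => T /andP[/andP[_ ->] ->].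
have miss_le : rho * P (fun T => miss l_other T && ~~ miss l_same T)
    <= rho * ((size l_same)%:R * rho).
  apply: (ler_wpM2l (density_ge0 R S)).
  apply: le_trans (cond_prob_not_miss_le l_sameX).
  by apply: le_cond_prob => T /andP[_ ->].
have := cond_prob_ge0 R W (fun T => (miss l_other T && ~~ miss l_same T) && hit x T).
have := mulr_ge0 (density_ge0 R S)
  (cond_prob_ge0 R W (fun T => miss l_other T && ~~ miss l_same T)).
rewrite ler_norml; lra.
Qed.

Lemma miss_cons_approx_min x l : x \in X -> {subset l <= X} -> uniq l -> x \notin l ->
  `|P (miss (x :: l)) - (1 - rho) * P (miss l)| <= rho ^+ 2 * (min_codeg free X x)%:R.
Proof.
move=> xX lX ul xl.
have rho2_ge0 : 0 <= rho ^+ 2 by rewrite exprn_ge0 ?density_ge0.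
have free_bound k : free k (x k) ->
    `|P (miss (x :: l)) - (1 - rho) * P (miss l)| <= rho ^+ 2 * (free_codeg free X k x)%:R.
  move=> xk; apply: le_trans (miss_cons_approx xX lX xl xk) _.
  by rewrite ler_wpM2l // ler_nat count_le_free_codeg.
have card_bound : `|P (miss (x :: l)) - (1 - rho) * P (miss l)| <= rho ^+ 2 * #|X|%:R.
  have [k xk] := X_free xX; apply: le_trans (free_bound k xk) _.
  by rewrite ler_wpM2l // ler_nat free_codeg_le_card.
rewrite /min_codeg; elim/big_ind: _ => // [m n | k _].
  by rewrite /Order.min; case: ifP.
by have [/free_bound | /free_codeg_nonfree ->] := boolP (free k (x k)).
Qed.

Lemma miss_approx l : uniq l -> {subset l <= X} ->
  `|P (miss l) - (1 - rho) ^+ size l| <= rho ^+ 2 * \sum_(x <- l) (min_codeg free X x)%:R.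
Proof.
elim: l => [|x l IHl] /=.
  have -> : P (miss [::]) = P predT by apply: eq_cond_prob.
  by rewrite big_nil mulr0 expr0 (cond_probT R W_nonempty) subrr normr0.
case/andP=> xl ul sub.
have xX : x \in X by apply: sub; rewrite mem_head.
have lX : {subset l <= X} by move=> y yl; apply: sub; rewrite inE yl orbT.
have step := miss_cons_approx_min xX lX ul xl.
have rho0 := density_ge0 R S; have rho1 := density_le1 R S.
rewrite big_cons mulrDr exprS.
set a := P (miss (x :: l)); set b := P (miss l); set t := (1 - rho) ^+ size l.
have -> : a - (1 - rho) * t = (a - (1 - rho) * b) + (1 - rho) * (b - t) by ring.
apply: le_trans (ler_normD _ _) _; apply: lerD => //.
rewrite normrM ger0_norm ?subr_ge0 //.
by apply: le_trans (IHl ul lX); apply: ler_piMl => //; lra.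
Qed.

End MissProbability.

Section PowerMean.
Variables (R : realFieldType) (I : finType) (A : {pred I}) (a : I -> R).
Hypothesis a_ge0 : forall i, 0 <= a i.

(* Chebyshev's sum inequality for the similarly ordered [a] and [a ^+ n]. *)
Lemma sum_mul_sum_exp_le n :
  (\sum_(i in A) a i) * (\sum_(i in A) a i ^+ n) <= #|A|%:R * \sum_(i in A) a i ^+ n.+1.
Proof.
pose D := \sum_(i in A) \sum_(j in A) (a i - a j) * a i ^+ n.
have pair_ge0 i j : 0 <= (a i - a j) * a i ^+ n + (a j - a i) * a j ^+ n.
  have -> : (a i - a j) * a i ^+ n + (a j - a i) * a j ^+ n =
            (a i - a j) * (a i ^+ n - a j ^+ n) by ring.
  have [aij | aji] := leP (a i) (a j).
    by rewrite mulr_le0 // subr_le0 // lerXn2r // nnegrE.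
  by rewrite mulr_ge0 // subr_ge0 ?(ltW aji) // lerXn2r ?nnegrE // ltW.
have D_ge0 : 0 <= D.
  suff : 0 <= D + D by lra.
  rewrite {2}/D exchange_big -big_split /=.
  by apply: sumr_ge0 => i _; rewrite -big_split; apply: sumr_ge0 => j _; apply: pair_ge0.
have -> : #|A|%:R * \sum_(i in A) a i ^+ n.+1 =
          D + (\sum_(i in A) a i ^+ n) * (\sum_(i in A) a i).
  rewrite /D mulr_sumr mulr_suml -big_split; apply: eq_bigr => i _.
  rewrite mulr_sumr -big_split /= mulr_natl -sumr_const.
  by apply: eq_bigr => j _; rewrite exprS; ring.
lra.
Qed.

Lemma power_mean_le n :
  (\sum_(i in A) a i) ^+ n.+1 <= #|A|%:R ^+ n * \sum_(i in A) a i ^+ n.+1.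
Proof.
elim: n => [|n IHn]; first by rewrite mul1r.
have sum_ge0 : 0 <= \sum_(i in A) a i by apply: sumr_ge0.
rewrite exprS (le_trans (ler_wpM2l sum_ge0 IHn)) // mulrCA exprSr -mulrA.
by rewrite ler_wpM2l ?exprn_ge0 // sum_mul_sum_exp_le.
Qed.

End PowerMean.

Lemma powR_two_sub_inv (R : realType) (x : R) c : 0 <= x -> (0 < c)%N ->
  (x `^ (2 - c%:R^-1)) ^+ c = x ^+ (2 * c - 1).
Proof.
move=> x0 c0; rewrite -powR_mulrn ?powR_ge0 // -powRrM -powR_mulrn //.
have c_neq0 : c%:R != 0 :> R by rewrite pnatr_eq0 -lt0n.
by rewrite natrB ?muln_gt0 // natrM mulrBl mulVf.
Qed.

Lemma sum_min_codeg_le (R : realType) c s (free : 'I_c -> 'I_s -> bool)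
    (X : {set Key c s}) (K : nat) (Kr : R) :
  (0 < c)%N -> 0 <= Kr -> K%:R <= Kr ^+ c ->
  (forall a : Key c s,
     (#|[set x : Key c s | [forall k, free k (x k) ==> (x k == a k)]]| <= K)%N) ->
  \sum_(x in X) (min_codeg free X x)%:R <= Kr * #|X|%:R `^ (2 - c%:R^-1).
Proof.
move=> c0 Kr0 K_le agree_le.
have mean := power_mean_le X (fun x => ler0n R (min_codeg free X x)) c.-1.
rewrite prednK // in mean.
have exp_sum : \sum_(x in X) (min_codeg free X x)%:R ^+ c <= K%:R * #|X|%:R ^+ c :> R.
  under eq_bigr => x _ do rewrite -natrX.
  by rewrite -natr_sum -natrX -natrM ler_nat sum_min_codeg_exp.
rewrite -(ler_pXn2r c0) ?nnegrE ?sumr_ge0 ?mulr_ge0 ?powR_ge0 //.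
rewrite exprMn powR_two_sub_inv //; apply: le_trans mean _.
apply: le_trans (ler_wpM2l (exprn_ge0 _ (ler0n _ _)) exp_sum) _.
have -> : (2 * c - 1 = c.-1 + c)%N by rewrite mul2n -addnn -subn1 addnC addnBA.
by rewrite mulrCA -exprD ler_wpM2r ?exprn_ge0.
Qed.

Section HitsApprox.
Variables (R : realType) (c s r : nat).
Hypothesis c_gt0 : (0 < c)%N.
Local Notation Tab := (Tables c s r).
Local Notation Key := (Key c s).
Variables (W : pred Tab) (free : 'I_c -> 'I_s -> bool).
Hypothesis W_nonempty : exists T, W T.
Hypothesis W_shift : forall k a, free k a -> shift_invariant k a W.
Variable X : {set Key}.
Hypothesis X_free : forall x, x \in X -> exists k, free k (x k).
Hypothesis X_sep : forall x y, x \in X -> y \in X -> x != y ->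
  exists2 j, x j != y j & free j (x j) || free j (y j).
Variables (K : nat) (Kr : R).
Hypothesis agree_le : forall a : Key,
  (#|[set x : Key | [forall k, free k (x k) ==> (x k == a k)]]| <= K)%N.
Hypotheses (Kr_ge0 : 0 <= Kr) (K_le : K%:R <= Kr ^+ c).

Lemma cond_prob_hits_approx_gen S :
  `|cond_prob R (hits X S) W - p0' #|X| (density R S)|
    <= Kr * #|X|%:R `^ (2 - c%:R^-1) * density R S ^+ 2.
Proof.
have hitsE : cond_prob R (hits X S) W = 1 - cond_prob R (miss S (enum X)) W.
  rewrite -(cond_probC _ W_nonempty); apply: eq_cond_prob => T; rewrite negbK.
  apply/existsP/hasP => [[x /andP[xX hx]] | [x]]; first by exists x; rewrite ?mem_enum.
  by rewrite mem_enum => xX hx; exists x; rewrite xX.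
have enumX : {subset enum X <= X} by move=> x; rewrite mem_enum.
have := miss_approx R W_nonempty W_shift S X_free X_sep (enum_uniq (mem X)) enumX.
rewrite -cardE big_enum /= hitsE /p0' => approx.
set u := cond_prob R _ W; set t := (1 - density R S) ^+ #|X|.
have -> : 1 - u - (1 - t) = - (u - t) by ring.
rewrite normrN mulrC; apply: le_trans approx _.
rewrite ler_wpM2l ?exprn_ge0 ?density_ge0 //.
exact: (sum_min_codeg_le X c_gt0 Kr_ge0 K_le agree_le).
Qed.

End HitsApprox.

Lemma card_agree_all c s (a : Key c s) :
  (#|[set x : Key c s | [forall k, x k == a k]]| <= 1)%N.
Proof.
rewrite -(cards1 a) subset_leq_card //; apply/subsetP => x; rewrite !inE => /forallP xa.
by apply/eqP/ffunP => k; apply/eqP.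
Qed.

Lemma card_agree_off c s (q a : Key c s) :
  (#|[set x : Key c s | [forall k, (x k != q k) ==> (x k == a k)]]| <= 2 ^ c)%N.
Proof.
pose F k := pred2 (a k) (q k).
apply: (@leq_trans #|family F|).
  apply: subset_leq_card; apply/subsetP => x; rewrite inE => /forallP xaq.
  by apply/familyP => k; rewrite inE orbC; have := xaq k; case: eqP.
rewrite card_family foldrE big_map big_enum.
apply: (@leq_trans (\prod_(k in 'I_c) 2)); last by rewrite prod_nat_const card_ord.
by apply: leq_prod => k _; rewrite (eq_card (B := pred2 (a k) (q k))) ?card2 ?ltnS ?leq_b1.
Qed.

Lemma cond_prob_predT (R : numFieldType) c s r (E : pred (Tables c s r)) :
  cond_prob R E predT = prob R E.
Proof. by congr (_%:R / _%:R); apply: eq_card => T; rewrite !inE ?andbT. Qed.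

Lemma prob_hits_approx (R : realType) c s r (X : {set Key c s}) (S : {set HV r}) :
  (0 < c)%N ->
  `|prob R (hits X S) - p0' #|X| (density R S)|
    <= #|X|%:R `^ (2 - c%:R^-1) * density R S ^+ 2.
Proof.
move=> c_gt0; rewrite -cond_prob_predT -[_ `^ _]mul1r.
apply: (cond_prob_hits_approx_gen c_gt0 (free := fun _ _ => true) _ _ _ _ (K := 1) _) => //.
- by exists [ffun=> [ffun=> [ffun=> false]]].
- by move=> x _; exists (Ordinal c_gt0).
- by move=> x y _ _ /exists_ffun_neq[j xyj]; exists j.
- exact: card_agree_all.
- by rewrite expr1n.
Qed.

Lemma cond_prob_hits_approx (R : realType) c s r (X : {set Key c s}) (S : {set HV r})
    (q : Key c s) (z : HV r) :
  (0 < c)%N -> q \notin X ->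
  `|cond_prob R (hits X S) (fun T => tab_hash T q == z) - p0' #|X| (density R S)|
    <= 2 * #|X|%:R `^ (2 - c%:R^-1) * density R S ^+ 2.
Proof.
move=> c_gt0 qX.
pose T0 : Tables c s r := [ffun=> [ffun=> [ffun=> false]]].
pose k0 := Ordinal c_gt0.
apply: (cond_prob_hits_approx_gen c_gt0 (free := fun k a => a != q k) _ _ _ _ (K := 2 ^ c) _).
- exists (shift_entry k0 (q k0) (hv_xor (tab_hash T0 q) z) T0).
  by rewrite tab_hash_shift_entry //; apply/eqP/ffunP => b; rewrite !ffunE addKb.
- by move=> k a qk v T; rewrite tab_hash_shift_entry_out // eq_sym.
- move=> x xX; apply: exists_ffun_neq.
  by apply: contraNneq qX => <-.
- move=> x y _ _ /exists_ffun_neq[j xyj]; exists j => //.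
  by apply: contraR xyj; rewrite negb_or !negbK => /andP[/eqP -> /eqP ->].
- exact: card_agree_off.
- exact: ler0n.
- by rewrite natrX.
Qed.

Theorem theorem5 (R : realType) (c s r : nat) (hc : (0 < c)%N)
    (X : {set Key c s}) :
  (forall S : {set HV r},
     `| prob R (hits X S) - p0' #|X| (density R S) |
       <= (#|X|%:R : R) `^ (2 - c%:R^-1) * density R S ^+ 2)
  /\
  (forall (q : Key c s) (Sf : HV r -> {set HV r}) (z : HV r),
     q \notin X ->
     `| cond_prob R (hits X (Sf z)) (fun T => tab_hash T q == z)
          - p0' #|X| (density R (Sf z)) |
       <= 2 * ((#|X|%:R : R) `^ (2 - c%:R^-1)) * density R (Sf z) ^+ 2).
Proof.
split=> [S | q Sf z qX]; first exact: prob_hits_approx.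
exact: cond_prob_hits_approx.
Qed.
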